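(* Let $\mathcal O_t=\{x\in\mathbb Z^d:N_{t,x}>0\}$ and let $|\mathcal O_t|$ be its cardinality. Suppose that $$\delta:=P\Big(\bigcap_{x\in\mathbb Z^d}\{A_{1,x,0}=0\}\Big)>0.$$ Then $P\big(\lim_{t\to\infty}|\mathcal O_t|\in\{0,\infty\}\big)=1$.
   Context: Let $d\ge1$. For $x\in\mathbb R^d$, $|x|=\sum_i|x_i|$. Let $A_t=(A_{t,x,y})_{x,y\in\mathbb Z^d}$, $t=1,2,\dots$, be i.i.d. random matrices on a probability space $(\Omega,\mathcal F,P)$ such that: (i) $A_{1,x,y}\ge0$; (ii) the columns $\{A_{1,\cdot,y}\}_{y\in\mathbb Z^d}$ are independent; (iii) $P[A_{1,x,y}^2]<\infty$ for all $x,y$; (iv) there is a nonrandom $r_A\in\mathbb N$ with $A_{1,x,y}=0$ a.s. if $|x-y|>r_A$; (v) $(A_{1,x+z,y+z})_{x,y}$ has the same law as $A_1$ for every $z\in\mathbb Z^d$; (vi) with $a_y=P[A_{1,0,y}]$, the set $\{x:\sum_y a_{x+y}a_y\neq0\}$ contains a linear basis of $\mathbb R^d$. Given a nonrandom $N_0\in[0,\infty)^{\mathbb Z^d}$ with $\{x:N_{0,x}>0\}$ finite and nonempty, define $N_{t,y}=\sum_xN_{t-1,x}A_{t,x,y}$ for $t\ge1$. *)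

From HB Require Import structures.
From mathcomp Require Import all_boot all_order all_algebra.
From mathcomp Require Import all_classical all_reals all_analysis.
Set Implicit Arguments. Unset Strict Implicit. Unset Printing Implicit Defensive.
Import Order.TTheory GRing.Theory Num.Theory.
Local Open Scope classical_set_scope.
Local Open Scope ring_scope.

Definition Zd (d : nat) := 'rV[int]_d.

Definition l1 (d : nat) (x : Zd d) : nat := (\sum_(i < d) `|x ord0 i|)%N.

(* Mutual independence of a family (indexed by I) of random vectors
   (X i j)_{j : J}, stated on finite-dimensional cylinder events, i.e. for
   the generating pi-systems of the sigma-algebras sigma(X i).  *)
Definition indep_family d (Omega : measurableType d) (R : realType)
  (P : probability Omega R) (I : eqType) (J : Type)
  (X : I -> J -> Omega -> R) : Prop :=
  forall (S : seq I), uniq S ->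
  forall (n : I -> nat) (f : I -> nat -> J) (B : I -> nat -> set R),
    (forall i k, measurable (B i k)) ->
    let cyl i := [set w | forall k, (k < n i)%N -> B i k (X i (f i k) w)] in
    P [set w | forall i, i \in S -> cyl i w] = (\prod_(i <- S) P (cyl i))%E.

(* Equality in law of two random fields (X j)_{j:J}, (Y j)_{j:J}
   (equality of all finite-dimensional distributions). *)
Definition same_law d (Omega : measurableType d) (R : realType)
  (P : probability Omega R) (J : Type) (X Y : J -> Omega -> R) : Prop :=
  forall (n : nat) (f : nat -> J) (B : nat -> set R),
    (forall k, measurable (B k)) ->
    P [set w | forall k, (k < n)%N -> B k (X (f k) w)] =
    P [set w | forall k, (k < n)%N -> B k (Y (f k) w)].

(* Population process: A n is the matrix A_{n+1} of the paper.
   N 0 = N0,  N (t+1) y = sum_x N t x * A_{t+1,x,y}. *)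
Fixpoint Npop d (Omega : Type) (R : realType) (N0 : Zd d -> R)
  (A : nat -> Zd d -> Zd d -> Omega -> R) (t : nat) (w : Omega) : Zd d -> R :=
  match t with
  | 0 => N0
  | t'.+1 => fun y => \sum_(x \in [set: Zd d]) Npop N0 A t' w x * A t' x y w
  end.

Definition occupied d (Omega : Type) (R : realType) (N0 : Zd d -> R)
  (A : nat -> Zd d -> Zd d -> Omega -> R) (t : nat) (w : Omega) : set (Zd d) :=
  [set x | 0 < Npop N0 A t w x].

From HB Require Import structures.
From mathcomp Require Import all_boot all_order all_algebra.
From mathcomp Require Import all_classical all_reals all_analysis.
From mathcomp Require Import finmap zify.
Import Order.TTheory GRing.Theory Num.Theory.
Set Implicit Arguments. Unset Strict Implicit. Unset Printing Implicit Defensive.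
Local Open Scope classical_set_scope.
Local Open Scope ring_scope.

(* Fix K.  If 0 < |O_t| <= K, the population is extinct at time t+1 as soon as
   A_{t+1} vanishes, for each of the at most K (2 r_A + 1)^d sites y that O_t can
   reach, on the column of y near y.  This event is independent of A_1, ..., A_t,
   which determine O_t, and has probability at least q^(K (2 r_A + 1)^d), where
   q >= delta > 0 is the probability that a single column vanishes near its site.
   Extinction happens at most once, so
   q^(K (2 r_A + 1)^d) * sum_t P(0 < |O_t| <= K) <= 1, and by Borel-Cantelli
   0 < |O_t| <= K holds only finitely often, almost surely, for every K.  As
   extinction is absorbing, |O_t| is either eventually 0 or tends to infinity. *)

Section Cube.
Variables (dd r : nat).

Definition cube : seq (Zd dd) :=
  [seq \row_i ((f i : nat)%:Z - r%:Z) | f : {ffun 'I_dd -> 'I_(r.*2).+1}].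

Lemma abs_le_l1 (v : Zd dd) i : (`|v ord0 i| <= l1 v)%N.
Proof. by rewrite /l1 (bigD1 i) //= leq_addr. Qed.

Lemma mem_cube (v : Zd dd) : (l1 v <= r)%N -> v \in cube.
Proof.
move=> lvr; have vir i : (`|v ord0 i| <= r)%N := leq_trans (abs_le_l1 v i) lvr.
pose f := [ffun i => inord (absz (v ord0 i + r%:Z)) : 'I_(r.*2).+1].
apply/mapP; exists f; first by rewrite mem_enum.
apply/rowP => i; rewrite mxE ffunE.
have vi := vir i.
by rewrite inordK ?gez0_abs ?addrK //; lia.
Qed.

End Cube.

Section FiniteRangeDynamics.
Variables (dd rA : nat) (R : realType) (N0 : Zd dd -> R).
Hypotheses (N0_ge0 : forall x, 0 <= N0 x) (N0_fin : finite_set [set x | 0 < N0 x]).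
Local Notation Z := (Zd dd).

Fixpoint hull t : seq Z :=
  if t is t'.+1 then undup [seq x - v | x <- hull t', v <- cube dd rA]
  else fset_set [set x | 0 < N0 x].

Lemma hull_uniq t : uniq (hull t).
Proof. by case: t => [|t]; [exact: fset_uniq | exact: undup_uniq]. Qed.

(* [Npop] with the sum over [Z^d] cut down to [hull t]; unlike [Npop] it is
   measurable in [w] without any assumption on [B]. *)
Fixpoint Nfin (T : Type) (B : nat -> Z -> Z -> T -> R) t (w : T) : Z -> R :=
  if t is t'.+1 then fun y => \sum_(x <- hull t') Nfin B t' w x * B t' x y w
  else N0.

Definition range_ok (T : Type) (B : nat -> Z -> Z -> T -> R) (w : T) :=
  forall t x y, 0 <= B t x y w /\ ((rA < l1 (x - y)%R)%N -> B t x y w = 0).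

Definition alive (T : Type) (B : nat -> Z -> Z -> T -> R) t (w : T) : seq bool :=
  [seq 0 < Nfin B t w x | x <- hull t].

Definition frontier t (m : seq bool) : seq Z :=
  undup [seq x - v | x <- mask m (hull t), v <- cube dd rA].

Definition column_pairs (Y : seq Z) : seq (Z * Z) :=
  [seq (y + v, y) | y <- Y, v <- cube dd rA].

Variables (T : Type) (B : nat -> Z -> Z -> T -> R) (w : T).
Hypothesis B_ok : range_ok B w.

Let B_ge0 t x y : 0 <= B t x y w := (B_ok t x y).1.
Let B_far t x y : (rA < l1 (x - y)%R)%N -> B t x y w = 0 := (B_ok t x y).2.

Lemma Nfin_ge0 t y : 0 <= Nfin B t w y.
Proof.
elim: t y => [|t IH] y /=; first exact: N0_ge0.
by apply: sumr_ge0 => x _; apply: mulr_ge0; [apply: IH | apply: B_ge0].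
Qed.

Lemma Nfin_out t y : y \notin hull t -> Nfin B t w y = 0.
Proof.
case: t => [|t] /= yN.
  apply/eqP; rewrite eq_le N0_ge0 andbT leNgt.
  by apply: contra yN => y0; rewrite in_fset_set // mem_setE.
apply: big1_seq => x /andP [_ xF].
have [far|near] := ltnP rA (l1 (x - y)); first by rewrite B_far ?mulr0.
case/negP: yN; rewrite mem_undup; apply/allpairsP; exists (x, x - y) => /=.
by rewrite mem_cube // opprB addrC subrK.
Qed.

Lemma Npop_Nfin t : Npop N0 B t w = Nfin B t w.
Proof.
elim: t => [|t IH] //=; apply/funext => y.
rewrite IH (fsbigE (hull t)) ?hull_uniq //.
- by rewrite big_mkcond /=; apply: eq_bigr => x _; rewrite in_setT.
- by move=> x _ xN; rewrite Nfin_out // mul0r.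
Qed.

Lemma Nfin_extinct t s : (t <= s)%N -> (forall y, Nfin B t w y = 0) ->
  forall y, Nfin B s w y = 0.
Proof.
move=> /subnKC <-; elim: (s - t)%N => [|k IH] N0t; first by rewrite addn0.
by move=> y; rewrite addnS /=; apply: big1 => x _; rewrite IH // mul0r.
Qed.

Lemma Nfin_dead t : ~~ has id (alive B t w) -> forall y, Nfin B t w y = 0.
Proof.
move=> dead y; have [yF|yN] := boolP (y \in hull t); last exact: Nfin_out.
apply/eqP; rewrite eq_le Nfin_ge0 andbT leNgt; apply: contra dead => Ny.
by apply/hasP; exists (0 < Nfin B t w y) => //; apply/mapP; exists y.
Qed.

Lemma count_alive_dead t : (forall y, Nfin B t w y = 0) -> count id (alive B t w) = 0%N.
Proof. by move=> dead; rewrite /alive; elim: (hull t) => //= x s ->; rewrite dead ltxx. Qed.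

Lemma Nfin_killed t :
  (forall p, p \in column_pairs (frontier t (alive B t w)) -> B t p.1 p.2 w = 0) ->
  forall y, Nfin B t.+1 w y = 0.
Proof.
move=> killed y /=; apply: big1_seq => x /andP [_ xF].
have := Nfin_ge0 t x; rewrite le_eqVlt => /orP [/eqP <-|Nx]; first by rewrite mul0r.
have [far|near] := ltnP rA (l1 (x - y)); first by rewrite B_far ?mulr0.
rewrite (killed (x, y)) ?mulr0 //; apply/allpairsP; exists (y, x - y) => /=.
rewrite mem_cube // addrC subrK; split => //.
rewrite mem_undup; apply/allpairsP; exists (x, x - y) => /=.
by rewrite mem_cube // -filter_mask mem_filter Nx xF opprB addrC subrK.
Qed.

Lemma counting_occupied t :
  counting (occupied N0 B t w) = ((count id (alive B t w))%:R)%:E :> \bar R.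
Proof.
set s := [seq x <- hull t | 0 < Nfin B t w x].
have -> : occupied N0 B t w = [set` [fset x in s]%fset].
  rewrite /occupied Npop_Nfin; apply/seteqP; split => x /=; rewrite inE mem_filter.
    by move=> Nx; rewrite Nx; apply: contraLR Nx => /Nfin_out ->; rewrite ltxx.
  by case/andP.
rewrite /counting asboolT ?finite_fset // set_fsetK card_fseq undup_id.
  by rewrite size_filter count_map.
by rewrite filter_uniq ?hull_uniq.
Qed.

Lemma occupied_dichotomy :
  (forall K, exists n, forall t, (n <= t)%N -> ~ (0 < count id (alive B t w) <= K)%N) ->
  ((fun t => @counting _ R (occupied N0 B t w)) @ \oo --> (0%R)%:E) \/
  ((fun t => @counting _ R (occupied N0 B t w)) @ \oo --> +oo%E).
Proof.
move=> few_fin.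
have [[t0 dead]|alive_all] := pselect (exists t0, count id (alive B t0 w) = 0%N).
  left; apply: cvg_near_cst; exists t0 => // t /= t0t.
  rewrite counting_occupied (count_alive_dead (Nfin_extinct t0t (Nfin_dead _))) //.
  by rewrite has_count dead.
right; apply/cvgeyPge => a; have [n few_n] := few_fin (Num.truncn a).
exists n => // t /= nt; rewrite counting_occupied lee_fin.
apply: le_trans (ltW (truncnS_gt a)) _; rewrite ler_nat.
have pos : (0 < count id (alive B t w))%N.
  by rewrite lt0n; apply/eqP => dead; apply: alive_all; exists t.
by rewrite ltnNge; apply/negP => le; apply: (few_n t nt); rewrite pos le.
Qed.

End FiniteRangeDynamics.

Lemma measurable_map_eq d (T : measurableType d) (I : Type) (f : I -> T -> bool)
    (s : seq I) (l : seq bool) :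
  (forall i, measurable_fun setT (f i)) -> measurable [set w | [seq f i w | i <- s] = l].
Proof.
move=> mf; elim: s l => [|i s IH] [|b l] /=.
- by rewrite (_ : [set w | _] = setT) //; apply/seteqP; split.
- by rewrite (_ : [set w | _] = set0) //; apply/seteqP; split.
- by rewrite (_ : [set w | _] = set0) //; apply/seteqP; split.
rewrite (_ : [set w | _] = f i @^-1` [set b] `&` [set w | [seq f i w | i <- s] = l]).
  by apply: measurableI (IH l); rewrite -[X in measurable X]setTI; apply: mf.
by apply/seteqP; split => w /=; case=> -> ->.
Qed.

Section AliveMeasurable.
Variables (dd rA : nat) (R : realType) (N0 : Zd dd -> R).
Variables (d : measure_display) (T : measurableType d) (B : nat -> Zd dd -> Zd dd -> T -> R).
Variable t : nat.
Hypothesis mB : forall s x y, (s < t)%N -> measurable_fun setT (B s x y).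

Lemma measurable_Nfin y : measurable_fun setT (fun w => Nfin rA N0 B t w y).
Proof.
elim: t mB y => [|s IH] mBs y /=; first exact: measurable_cst.
apply: measurable_sum => x; apply: measurable_realfun.measurable_funM; last exact: mBs.
by apply: IH => r x' y' /ltnW; apply: mBs.
Qed.

Lemma measurable_alive (l : seq bool) : measurable [set w | alive rA N0 B t w = l].
Proof.
apply: measurable_map_eq => x.
apply: measurable_realfun.measurable_fun_ltr; first exact: measurable_cst.
exact: measurable_Nfin.
Qed.

End AliveMeasurable.

Section PastIndependence.
Variables (dd : nat) (d : measure_display) (Omega : measurableType d)
  (R : realType) (P : probability Omega R) (A : nat -> Zd dd -> Zd dd -> Omega -> R).
Local Notation Z := (Zd dd).
Hypothesis mA : forall t x y, measurable_fun setT (A t x y).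
Hypothesis A_indep : indep_family P (fun (t : nat) (p : Z * Z) => A t p.1 p.2).

Definition cyl t n (f : nat -> Z * Z) (S : nat -> set R) : set Omega :=
  [set w | forall k, (k < n)%N -> S k (A t (f k).1 (f k).2 w)].

Definition past t : set (set Omega) :=
  [set E | exists n f (S : nat -> nat -> set R), (forall i k, measurable (S i k)) /\
    E = [set w | forall i, (i < t)%N -> cyl i (n i) (f i) (S i) w]].

Lemma measurable_entry t x y (S : set R) : measurable S -> measurable [set w | S (A t x y w)].
Proof. by move=> mS; rewrite -[X in measurable X]setTI; apply: mA. Qed.

Lemma past_measurable_entry s t x y : (s < t)%N ->
  measurable_fun setT (A s x y : g_sigma_algebraType (past t) -> R).
Proof.
move=> st _ S mS; rewrite setTI; apply: sub_sigma_algebra.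
exists (fun i => if i == s then 1%N else 0%N), (fun _ _ => (x, y)), (fun _ _ => S).
split => //; apply/seteqP; split => w /=.
  by move=> Sw i it k; case: eqP => [->|] // _; apply: Sw.
by move=> h; have := h s st 0%N; rewrite eqxx; apply.
Qed.

Lemma measurable_cyl t n f S : (forall k, measurable (S k)) -> measurable (cyl t n f S).
Proof.
move=> mS; rewrite (_ : cyl _ _ _ _ = \bigcap_(k in [set k | (k < n)%N])
    (A t (f k).1 (f k).2 @^-1` S k)); last by apply/seteqP; split => w /= h k; apply: h.
by apply: bigcap_measurableType => k _; rewrite -[X in measurable X]setTI; apply: mA.
Qed.

Lemma past_measurable t : past t `<=` measurable.
Proof.
move=> _ [n [f [S [mS ->]]]].
rewrite (_ : [set w | _] = \bigcap_(i in [set i | (i < t)%N]) cyl i (n i) (f i) (S i)).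
  by apply: bigcap_measurableType => i _; apply: measurable_cyl.
by apply/seteqP; split => w /= h k; apply: h.
Qed.

Lemma past_setI_closed t : setI_closed (past t).
Proof.
move=> _ _ [n1 [f1 [S1 [mS1 ->]]]] [n2 [f2 [S2 [mS2 ->]]]].
exists (fun i => n1 i + n2 i)%N.
exists (fun i k => if (k < n1 i)%N then f1 i k else f2 i (k - n1 i)%N).
exists (fun i k => if (k < n1 i)%N then S1 i k else S2 i (k - n1 i)%N).
split; first by move=> i k; case: ifP.
apply/seteqP; split => w /=.
  move=> [h1 h2] i it k kn; case: ifP => k1; first exact: h1.
  by apply: h2 => //; lia.
move=> h; split => i it k kn; first by have := h i it k; rewrite kn; apply; lia.
have kn1 : (n1 i + k < n1 i)%N = false by lia.
by have := h i it (n1 i + k)%N; rewrite kn1 addKn; apply; lia.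
Qed.

Local Open Scope ereal_scope.

Lemma P_past_cyl t n f S : (forall i k, measurable (S i k)) ->
  P [set w | forall i, (i < t)%N -> cyl i (n i) (f i) (S i) w] =
  \prod_(0 <= i < t) P (cyl i (n i) (f i) (S i)).
Proof.
move=> mS; rewrite -(A_indep (iota_uniq 0 (t - 0)) n f mS).
congr (P _); apply/seteqP; split => w /= h i.
  by rewrite mem_iota add0n subn0 => /andP [_]; apply: h.
by move=> it; apply: h; rewrite mem_iota add0n subn0 it.
Qed.

Lemma past_indep_cyl t E n f S : past t E -> (forall k, measurable (S k)) ->
  P (E `&` cyl t n f S) = P E * P (cyl t n f S).
Proof.
move=> [n' [f' [S' [mS' ->]]]] mS.
pose up (U : Type) (g : nat -> U) (a : U) i := if i == t then a else g i.
have mS2 i k : measurable (up _ S' S i k) by rewrite /up; case: eqP.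
have -> : [set w | forall i, (i < t)%N -> cyl i (n' i) (f' i) (S' i) w] `&` cyl t n f S =
    [set w | forall i, (i < t.+1)%N -> cyl i (up _ n' n i) (up _ f' f i) (up _ S' S i) w].
  apply/seteqP; split => w /=.
    move=> [past_w cyl_w] i; rewrite ltnS leq_eqVlt /up => /orP [/eqP ->|it].
      by rewrite eqxx.
    by rewrite ltn_eqF //; apply: past_w.
  move=> h; split; last by have := h t (ltnSn t); rewrite /up eqxx.
  by move=> i it; have := h i (ltnW it); rewrite /up ltn_eqF.
rewrite !P_past_cyl // big_nat_recr //= /up eqxx; congr (_ * _).
by apply: eq_big_nat => i /andP [_ /ltn_eqF ->].
Qed.

(* Both sides are finite measures in [E] that agree on the pi-system [past t]. *)
Lemma sigma_past_indep_cyl t E n f S : (forall k, measurable (S k)) ->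
  <<s past t >> E -> P (E `&` cyl t n f S) = P E * P (cyl t n f S).
Proof.
move=> mS sE; set C := cyl t n f S.
have mC : measurable C by apply: measurable_cyl.
have finP X : measurable X -> (fine (P X))%:E = P X.
  by move=> mX; rewrite fineK // fin_num_measure.
pose m1 := mrestr P mC.
pose m2 := mscale (NngNum (fine_ge0 (measure_ge0 P C))) P.
have m1m2 X : <<s past t >> X -> m1 X = m2 X.
  have trace : [set Y | past t Y /\ Y `<=` setT] = past t.
    by apply/seteqP; split => Y /=; [case|split].
  have := @g_sigma_algebra_measure_unique_trace _ R Omega (past t) setT measurableT.
  rewrite trace; apply => //.
  - exact: past_measurable.
  - exact: past_setI_closed.
  - by rewrite /m1 /m2 /= /mrestr /mscale /= setTI probability_setT mule1 finP.
  - move=> Y pY; rewrite /m1 /m2 /= /mrestr /mscale /= finP //.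
    by rewrite past_indep_cyl // muleC.
  - by rewrite /m1 /= /mrestr setTI (le_lt_trans (probability_le1 P mC)) // ltey.
have := m1m2 E sE; rewrite /m1 /m2 /= /mrestr /mscale /= finP //.
by rewrite muleC.
Qed.

End PastIndependence.

Lemma ae_forall_countable d (T : measurableType d) (R : realType)
    (mu : {measure set T -> \bar R}) (U : countType) (Q : U -> T -> Prop) :
  (forall u, {ae mu, forall w, Q u w}) -> {ae mu, forall w, forall u, Q u w}.
Proof.
move=> aeQ; pose Qn n w := if choice.unpickle n is Some u then Q u w else True.
have : {ae mu, forall w, forall n, Qn n w}.
  apply: ae_foralln => n; rewrite /Qn.
  by case: (choice.unpickle n) => [u|]; [exact: aeQ | exact: aeW].
by apply: filterS => w Qw u; have := Qw (choice.pickle u); rewrite /Qn choice.pickleK.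
Qed.

Lemma measurable_forall_countable d (T : measurableType d) (U : countType)
    (E : U -> set T) :
  (forall u, measurable (E u)) -> measurable [set w | forall u, E u w].
Proof.
move=> mE; pose En n := if choice.unpickle n is Some u then E u else setT.
rewrite (_ : [set w | _] = \bigcap_n En n).
  by apply: bigcapT_measurable => n; rewrite /En; case: (choice.unpickle n).
apply/seteqP; split => w /= Ew.
  by move=> n _; rewrite /En; case: (choice.unpickle n).
by move=> u; have := Ew (choice.pickle u) I; rewrite /En choice.pickleK.
Qed.

Lemma cyl_seq (T U : Type) (J : eqType) (X : J -> T -> U) (ps : seq J) j0 (S : set U) :
  [set w | forall k, (k < size ps)%N -> S (X (nth j0 ps k) w)] =
  [set w | forall p, p \in ps -> S (X p w)].
Proof.
apply/seteqP; split => w /= h; last by move=> k kp; apply/h/mem_nth.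
by move=> p /(nthP j0) [k kp <-]; apply: h.
Qed.

Section Extinction.
Variables (dd : nat) (d : measure_display) (Omega : measurableType d)
  (R : realType) (P : probability Omega R)
  (A : nat -> Zd dd -> Zd dd -> Omega -> R) (rA : nat) (N0 : Zd dd -> R).
Local Notation Z := (Zd dd).
Local Notation cube := (cube dd rA).
Hypothesis mA : forall t x y, measurable_fun setT (A t x y).
Hypothesis A_indep : indep_family P (fun (t : nat) (p : Z * Z) => A t p.1 p.2).
Hypothesis A_law : forall t, same_law P (fun p : Z * Z => A t p.1 p.2)
  (fun p : Z * Z => A 0 p.1 p.2).
Hypothesis A_ge0 : {ae P, forall w, forall x y, 0 <= A 0%N x y w}.
Hypothesis A_col_indep : indep_family P (fun (y : Z) (x : Z) => A 0 x y).
Hypothesis A_range :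
  forall x y : Z, (rA < l1 (x - y)%R)%N -> {ae P, forall w, A 0%N x y w = 0}.
Hypothesis A_shift : forall z : Z, same_law P (fun p : Z * Z => A 0 (p.1 + z) (p.2 + z))
  (fun p : Z * Z => A 0 p.1 p.2).
Hypotheses (N0_ge0 : forall x, 0 <= N0 x) (N0_fin : finite_set [set x | 0 < N0 x]).

Lemma law_entries t (ps : seq (Z * Z)) (S : set R) : measurable S ->
  P [set w | forall p, p \in ps -> S (A t p.1 p.2 w)] =
  P [set w | forall p, p \in ps -> S (A 0 p.1 p.2 w)].
Proof.
move=> mS; have := A_law t (size ps) (nth (0, 0) ps) (fun=> mS).
by rewrite (cyl_seq (fun p w => A t p.1 p.2 w)) (cyl_seq (fun p w => A 0 p.1 p.2 w)).
Qed.

Lemma ae_setC (E : set Omega) : measurable E -> {ae P, forall w, E w} <-> P (~` E) = 0.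
Proof. by move=> mE; apply: negligibleP; apply: measurableC. Qed.

Lemma ae_entry_law t x y (S : set R) : measurable S ->
  {ae P, forall w, S (A 0 x y w)} -> {ae P, forall w, S (A t x y w)}.
Proof.
move=> mS ae0; have mE s : measurable [set w | S (A s x y w)] by exact: (measurable_entry mA).
have entry s : [set w | forall p, p \in [:: (x, y)] -> S (A s p.1 p.2 w)] =
    [set w | S (A s x y w)].
  apply/seteqP; split => w /= h; first exact: (h (x, y) (mem_head _ _)).
  by move=> p; rewrite mem_seq1 => /eqP ->.
apply/(ae_setC (mE t)).
rewrite probability_setC // -entry law_entries // entry.
by rewrite -probability_setC //; apply/(ae_setC (mE 0%N)).
Qed.

Lemma ae_range_ok : {ae P, forall w, range_ok rA A w}.
Proof.
have ok t x y : {ae P, forall w, 0 <= A t x y w /\ ((rA < l1 (x - y)%R)%N -> A t x y w = 0)}.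
  have ge0 : {ae P, forall w, `[0, +oo[%classic (A t x y w)}.
    apply: (ae_entry_law t (measurable_itv _)).
    by apply: filterS A_ge0 => w /(_ x y); rewrite /= in_itv /= andbT.
  have far : {ae P, forall w, (rA < l1 (x - y)%R)%N -> A t x y w = 0}.
    have [far|near] := ltnP rA (l1 (x - y)%R); last by apply: aeW => w /= far; lia.
    by apply: filterS (ae_entry_law t (measurable_set1 0) (A_range far)) => w /= ->.
  by apply: filterS2 ge0 far => w /=; rewrite in_itv /= andbT.
have : {ae P, forall w, forall t (p : Z * Z),
    0 <= A t p.1 p.2 w /\ ((rA < l1 (p.1 - p.2)%R)%N -> A t p.1 p.2 w = 0)}.
  by apply: ae_forall_countable => t; apply: ae_forall_countable => -[x y]; apply: ok.
by apply: filterS => w ok_w t x y; apply: (ok_w t (x, y)).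
Qed.

Definition kill t (Y : seq Z) : set Omega :=
  [set w | forall p, p \in column_pairs rA Y -> A t p.1 p.2 w = 0].

Lemma kill_cyl t Y : kill t Y =
  cyl A t (size (column_pairs rA Y)) (nth (0, 0) (column_pairs rA Y)) (fun=> [set 0]).
Proof. by rewrite /cyl (cyl_seq (fun p w => A t p.1 p.2 w)). Qed.

Lemma measurable_kill t Y : measurable (kill t Y).
Proof. by rewrite kill_cyl; apply: (measurable_cyl mA) => k; apply: measurable_set1. Qed.

Definition pkill : R := fine (P (kill 0 [:: 0])).

Lemma pkillE : pkill%:E = P (kill 0 [:: 0]).
Proof. by apply/fineK/fin_num_measure/measurable_kill. Qed.

(* Columns of distinct sites are independent by (ii); by (v) and stationarity
   in time, each vanishes near its site with probability [pkill]. *)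
Lemma P_kill t Y : uniq Y -> P (kill t Y) = (pkill ^+ size Y)%:E.
Proof.
move=> uY; pose col y k := y + nth 0 cube k.
have kill0E Y' : kill 0 Y' = [set w | forall y, y \in Y' ->
    forall k, (k < size cube)%N -> [set 0] (A 0 (col y k) y w)].
  apply/seteqP; split => w /= h.
    move=> y yY k kc; apply: (h (col y k, y)); apply/allpairsP.
    by exists (y, nth 0 cube k); rewrite mem_nth.
  by move=> _ /allpairsP [[y v] [/= yY vc ->]] /=; have [k kc <-] := nthP 0 vc; apply: h.
have P_col y :
    P [set w | forall k, (k < size cube)%N -> [set 0] (A 0 (col y k) y w)] = pkill%:E.
  have kill00 : kill 0 [:: 0] =
      [set w | forall k, (k < size cube)%N -> [set 0] (A 0 (nth 0 cube k) 0 w)].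
    rewrite kill0E; apply/seteqP; split => w /= h.
      by move=> k kc; have := h 0 (mem_head _ _) k kc; rewrite /col add0r.
    by move=> y'; rewrite mem_seq1 => /eqP -> k kc; rewrite /col add0r; apply: h.
  have := A_shift y (size cube) (fun k => (nth 0 cube k, 0)) (fun=> measurable_set1 0).
  rewrite pkillE kill00 /= => <-; congr (P _); apply/seteqP.
  by split => w /= h k kc; have := h k kc; rewrite /col addrC add0r.
have -> := law_entries t (column_pairs rA Y) (measurable_set1 0).
change (P (kill 0 Y) = (pkill ^+ size Y)%:E).
have := A_col_indep uY (fun=> size cube) col (fun _ _ => measurable_set1 0).
rewrite /= -kill0E => ->; rewrite (eq_bigr (fun=> pkill%:E)); last by move=> y _; apply: P_col.
rewrite prodEFin big_const_seq count_predT; congr EFin.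
by elim: (size Y) => //= n ->; rewrite exprS.
Qed.

Lemma pkill_gt0 : (0 < P [set w | forall x, A 0%N x 0%R w = 0%R])%E -> 0 < pkill.
Proof.
move=> delta_gt0; rewrite -lte_fin pkillE (lt_le_trans delta_gt0) //.
apply: le_measure.
- apply/mem_set/measurable_forall_countable => x.
  exact: (measurable_entry mA 0 x 0 (measurable_set1 0)).
- exact/mem_set/measurable_kill.
- move=> w /= col0 p /allpairsP [[y v] [/=]].
  by rewrite mem_seq1 => /eqP -> _ ->; apply: col0.
Qed.

Lemma P_kill_frontier_ge t (m : seq bool) K :
  size m = size (hull rA N0 t) -> (count id m <= K)%N ->
  ((pkill ^+ (K * size cube))%:E <= P (kill t (frontier rA N0 t m)))%E.
Proof.
move=> sm mK; rewrite P_kill ?undup_uniq // lee_fin.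
have pkill_le1 : pkill <= 1.
  by rewrite -lee_fin pkillE; apply/probability_le1/measurable_kill.
apply: ler_wiXn2l; [exact/fine_ge0/measure_ge0 | exact: pkill_le1 |].
apply: leq_trans (size_undup _) _; rewrite size_allpairs size_mask //.
exact: leq_mul.
Qed.

Local Notation hull := (hull rA N0).
Local Notation alive := (alive rA N0 A).

Definition pattern t (m : seq bool) : set Omega := [set w | alive t w = m].

Lemma measurable_pattern t m : measurable (pattern t m).
Proof. by apply: measurable_alive => s x y _; apply: mA. Qed.

Lemma pattern_past t m : <<s past A t >> (pattern t m).
Proof.
exact: (@measurable_alive _ rA _ N0 _ (g_sigma_algebraType (past A t)) A t
  (fun s x y => @past_measurable_entry _ _ _ _ A s t x y)).
Qed.

Lemma pattern_bigcup t (Q : pred (seq bool)) : [set w | Q (alive t w)] =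
  \bigcup_(m in [set m : (size (hull t)).-tuple bool | Q m]) pattern t m.
Proof.
apply/seteqP; split => w /=; last by move=> [m Qm /= ->].
have sa : size (alive t w) == size (hull t) by rewrite size_map.
by move=> Qw; exists (Tuple sa).
Qed.

Lemma trivIset_pattern t (D : set ((size (hull t)).-tuple bool)) :
  trivIset D (fun m => pattern t m).
Proof. by move=> m1 m2 _ _ [w [/= e1 e2]]; apply: val_inj; rewrite /= -e1 -e2. Qed.

Lemma measurable_alive_pred t (Q : pred (seq bool)) : measurable [set w | Q (alive t w)].
Proof.
rewrite pattern_bigcup; apply: fin_bigcup_measurable; first exact: finite_finset.
by move=> m _; apply: measurable_pattern.
Qed.

Definition few K t : set Omega := [set w | (0 < count id (alive t w) <= K)%N].

Definition dies_next K t : set Omega := few K t `&` [set w | ~~ has id (alive t.+1 w)].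

Lemma few_bigcup K t : few K t =
  \bigcup_(m in [set m : (size (hull t)).-tuple bool | (0 < count id m <= K)%N]) pattern t m.
Proof. exact: (pattern_bigcup t (fun s => 0 < count id s <= K)%N). Qed.

Lemma measurable_few K t : measurable (few K t).
Proof. exact: (measurable_alive_pred t (fun s => 0 < count id s <= K)%N). Qed.

Lemma measurable_dies_next K t : measurable (dies_next K t).
Proof.
apply/measurableI/(measurable_alive_pred t.+1 (fun s => ~~ has id s)).
exact: measurable_few.
Qed.

Variable bad : set Omega.
Hypotheses (mbad : measurable bad) (Pbad : P bad = 0%E)
  (bad_ok : ~` [set w | range_ok rA A w] `<=` bad).

Let ok w : ~ bad w -> range_ok rA A w.
Proof. by move=> nbad; apply: contrapT => nok; apply/nbad/bad_ok. Qed.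

Local Open Scope ereal_scope.

Lemma P_setIC_bad X : measurable X -> P (X `&` ~` bad) = P X.
Proof.
move=> mX; rewrite -setDE measureD //; last first.
  by rewrite (le_lt_trans (probability_le1 P mX)) // ltey.
by rewrite (@subset_measure0 _ _ _ P (X `&` bad) bad) ?sube0 //; exact: measurableI.
Qed.

(* We condition pattern by pattern: [pattern t m] is an event of the past, while
   [kill t (frontier t m)] only depends on [A t]. *)
Lemma P_dies_next_ge K t :
  (pkill ^+ (K * size cube))%:E * P (few K t) <= P (dies_next K t `&` ~` bad).
Proof.
pose good := [set m : (size (hull t)).-tuple bool | (0 < count id m <= K)%N].
pose E m := pattern t m `&` kill t (frontier rA N0 t m) `&` ~` bad.
have mE m : measurable (E m).
  exact/measurableI/measurableC/mbad/measurableI/measurable_kill/measurable_pattern.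
apply: (@le_trans _ _ (\sum_(m \in good) P (E m))).
  rewrite few_bigcup measure_fin_bigcup //; last 3 first.
  - exact: finite_finset.
  - exact: trivIset_pattern.
  - by move=> m _; apply: measurable_pattern.
  rewrite ge0_mule_fsumr //; apply: lee_fsum => [|m /andP [_ mK]].
    exact: finite_finset.
  rewrite /E P_setIC_bad; last exact/measurableI/measurable_kill/measurable_pattern.
  rewrite kill_cyl (sigma_past_indep_cyl mA A_indep) -?kill_cyl;
    [|by move=> k; apply: measurable_set1 | exact: pattern_past].
  by rewrite [leLHS]muleC; apply: lee_wpmul2l => //; rewrite P_kill_frontier_ge ?size_tuple.
rewrite -measure_fin_bigcup //; last 2 first.
- exact: finite_finset.
- move=> m1 m2 _ _ [w [[[e1 _] _] [[e2 _] _]]].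
  by apply: (@trivIset_pattern t setT m1 m2 I I); exists w.
apply: le_measure; rewrite ?inE.
- by apply/mem_set/fin_bigcup_measurable => [|m _]; [exact: finite_finset | exact: mE].
- exact/mem_set/measurableI/measurableC/mbad/measurable_dies_next.
move=> w [m /= mgood [[/= mw killw] nbad]]; split => //; split; first by rewrite /few /= mw.
rewrite -mw in killw; rewrite /= has_count count_alive_dead //.
exact: (Nfin_killed N0_ge0 (ok nbad)).
Qed.

Lemma trivIset_dies_next K : trivIset setT (fun t => dies_next K t `&` ~` bad).
Proof.
have never_again i j w : (i < j)%N -> (dies_next K i `&` ~` bad) w -> ~ few K j w.
  move=> ij [[_ dead] nbad]; rewrite /few /=.
  by rewrite (count_alive_dead (Nfin_extinct ij (Nfin_dead N0_ge0 N0_fin (ok nbad) dead))).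
move=> i j _ _ [w [wi wj]]; case: (ltngtP i j) => // ij; exfalso.
- by apply: (never_again i j w ij wi); case: wj => [[]].
- by apply: (never_again j i w ij wj); case: wi => [[]].
Qed.

Lemma summable_few K : (0 < pkill)%R -> \sum_(0 <= t <oo) P (few K t) < +oo.
Proof.
move=> pkill_gt0; have c_gt0 : (0 < pkill ^+ (K * size cube))%R by rewrite exprn_gt0.
have : \sum_(0 <= t <oo) ((pkill ^+ (K * size cube))%:E * P (few K t)) <= 1.
  apply: (@le_trans _ _ (\sum_(0 <= t <oo) P (dies_next K t `&` ~` bad))).
    apply: lee_nneseries => [t _ _|t _]; last exact: P_dies_next_ge.
    by apply: mule_ge0 => //; rewrite lee_fin ltW.
  have mD t : measurable (dies_next K t `&` ~` bad).
    exact/measurableI/measurableC/mbad/measurable_dies_next.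
  rewrite -(eq_eseriesl _ (P := fun i => i \in setT)); last by move=> i; rewrite in_setT.
  rewrite -measure_bigcup //; last exact: trivIset_dies_next.
  exact/probability_le1/bigcup_measurable.
rewrite nneseriesZl // -lee_pdivlMl // => bound.
by rewrite (le_lt_trans bound) // mule1 ltey.
Qed.

Lemma ae_few_finitely_often K : (0 < pkill)%R ->
  {ae P, forall w, exists n, forall t, (n <= t)%N -> ~ few K t w}.
Proof.
move=> pkill_gt0; exists (lim_sup_set (few K)); split.
- apply: bigcapT_measurable => n; apply: bigcup_measurable => t _.
  exact: measurable_few.
- exact/lim_sup_set_cvg0/summable_few/pkill_gt0/measurable_few.
move=> w /= nfin n _; apply: contrapT => nfew; apply: nfin.
by exists n => t nt ft; apply: nfew; exists t.
Qed.

End Extinction.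

Unset Implicit Arguments.

Theorem lemma1p3 (dd : nat) (d0 : measure_display) (Omega : measurableType d0)
  (R : realType) (P : probability Omega R)
  (A : nat -> Zd dd -> Zd dd -> Omega -> R) (rA : nat) (N0 : Zd dd -> R) :
  (0 < dd)%N ->
  (* each entry is a random variable *)
  (forall t x y, measurable_fun setT (A t x y)) ->
  (* (A_t)_t independent *)
  indep_family P (fun (t : nat) (p : Zd dd * Zd dd) => A t p.1 p.2) ->
  (* (A_t)_t identically distributed *)
  (forall t, same_law P (fun p : Zd dd * Zd dd => A t p.1 p.2)
                        (fun p : Zd dd * Zd dd => A 0 p.1 p.2)) ->
  (* (i) nonnegative entries *)
  {ae P, forall w, forall x y, (0 <= A 0%N x y w)%R} ->
  (* (ii) independent columns *)
  indep_family P (fun (y : Zd dd) (x : Zd dd) => A 0 x y) ->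
  (* (iii) finite second moments *)
  (forall x y : Zd dd, ('E_P[fun w => (A 0%N x y w ^+ 2)%R] < +oo)%E) ->
  (* (iv) finite range *)
  (forall x y : Zd dd, (rA < l1 (x - y)%R)%N -> {ae P, forall w, A 0%N x y w = 0%R}) ->
  (* (v) shift invariance in law *)
  (forall z : Zd dd, same_law P (fun p : Zd dd * Zd dd => A 0 (p.1 + z) (p.2 + z))
                               (fun p : Zd dd * Zd dd => A 0 p.1 p.2)) ->
  (* (vi) {x : sum_y a_{x+y} a_y <> 0} contains a linear basis of R^d *)
  (let a (y : Zd dd) : R := fine ('E_P[A 0%N 0%R y])%E in
   exists M : 'M[int]_dd,
     (forall i, \sum_(y \in [set: Zd dd]) a (row i M + y) * a y != 0) /\
     row_free (map_mx (fun z : int => z%:~R : R) M) /\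
     row_full (map_mx (fun z : int => z%:~R : R) M)) ->
  (* initial configuration *)
  (forall x, 0 <= N0 x) ->
  finite_set [set x | 0 < N0 x] ->
  [set x | 0 < N0 x] !=set0 ->
  (* delta > 0 *)
  (0 < P [set w | forall x, A 0%N x 0%R w = 0%R])%E ->
  {ae P, forall w,
     ((fun t => @counting _ R (occupied N0 A t w)) @ \oo --> (0%R)%:E) \/
     ((fun t => @counting _ R (occupied N0 A t w)) @ \oo --> +oo%E)}.
Proof.
move=> _ mA A_indep A_law A_ge0 A_col_indep _ A_range A_shift _ N0_ge0 N0_fin _ delta_gt0.
have ae_ok := ae_range_ok mA A_law A_ge0 A_range.
have [bad [mbad Pbad bad_ok]] := ae_ok.
have pkill_gt0 := pkill_gt0 rA mA delta_gt0.
have : {ae P, forall w, forall K, exists n, forall t, (n <= t)%N -> ~ few A rA N0 K t w}.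
  apply: ae_foralln => K.
  exact: (ae_few_finitely_often mA A_indep A_law A_col_indep A_shift N0_ge0 N0_fin
    mbad Pbad bad_ok K pkill_gt0).
apply: filterS2 ae_ok => w ok_w few_fin.
exact: (occupied_dichotomy N0_ge0 N0_fin ok_w few_fin).
Qed.
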